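(* Let $(X,d)$ be a Hadamard space, $o\in X$ a fixed point and $\|x\|:=d(x,o)$ for $x\in X$. Let $C$ be a nonempty closed convex subset of $X$ and $T:C\to C$ a nonexpansive mapping with nonempty fixed point set $F(T)$. Let $\{\alpha_n\}_{n\ge0}$, $\{\beta_n\}_{n\ge0}$ be sequences in $(0,1)$ and $\{u_n\}_{n\ge0}\subset X$. Let $x_0\in C$ be arbitrary and define for $n\geqslant0$ $$y_n=\alpha_nu_n\oplus(1-\alpha_n)Tx_n,\qquad x_{n+1}=(1-\beta_n)x_n\oplus\beta_nP_Cy_n.$$ Suppose (i) $\lim_{n\to\infty}\alpha_n=0$ and $\sum_{n=0}^\infty\alpha_n=\infty$; (ii) $0<\liminf_{n\to\infty}\beta_n\leqslant\limsup_{n\to\infty}\beta_n<1$; (iii) $\sum_{n=0}^\infty\alpha_n\|u_n\|<\infty$. Then $\{x_n\}$ converges (in the metric $d$) to some $q\in F(T)$.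
   Context: A Hadamard space is a complete CAT(0) space. For $x,y\in X$ and $\lambda\in[0,1]$, $\lambda x\oplus(1-\lambda)y$ denotes the unique point $z$ on the geodesic segment from $x$ to $y$ with $d(z,x)=(1-\lambda)d(x,y)$ and $d(z,y)=\lambda d(x,y)$. $P_C:X\to C$ is the metric projection onto $C$ (the nearest-point map). $T$ nonexpansive means $d(Tx,Ty)\le d(x,y)$ for all $x,y\in C$, and $F(T)=\{x\in C: Tx=x\}$. *)

From Stdlib Require Import Reals.
From Coquelicot Require Import Coquelicot.
Open Scope R_scope.

Section Hadamard.
Variable X : Type.
Variable d : X -> X -> R.

Definition is_metric : Prop :=
  (forall x y, 0 <= d x y) /\
  (forall x y, d x y = 0 <-> x = y) /\
  (forall x y, d x y = d y x) /\
  (forall x y z, d x z <= d x y + d y z).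

Definition d_cauchy (s : nat -> X) : Prop :=
  forall eps, 0 < eps -> exists N, forall m n, (N <= m)%nat -> (N <= n)%nat ->
    d (s m) (s n) < eps.

Definition d_converges_to (s : nat -> X) (z : X) : Prop :=
  forall eps, 0 < eps -> exists N, forall n, (N <= n)%nat -> d (s n) z < eps.

Definition d_complete : Prop :=
  forall s, d_cauchy s -> exists z, d_converges_to s z.

Definition geodesic (x y : X) (c : R -> X) : Prop :=
  c 0 = x /\ c (d x y) = y /\
  forall s t, 0 <= s <= d x y -> 0 <= t <= d x y -> d (c s) (c t) = Rabs (s - t).

Definition geodesic_space : Prop :=
  forall x y, exists c, geodesic x y c.

Definition eucl (p q : R * R) : R :=
  sqrt ((fst p - fst q) ^ 2 + (snd p - snd q) ^ 2).

Definition lerp (a b : R * R) (t : R) : R * R :=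
  (fst a + t * (fst b - fst a), snd a + t * (snd b - snd a)).

(* p lies on the side [x,y] (traversed by the geodesic c) at parameter s, and
   pbar is its comparison point on the comparison side [a,b]. *)
Definition on_side (x y : X) (c : R -> X) (a b : R * R) (p : X) (pbar : R * R)
  : Prop :=
  exists s, 0 <= s <= d x y /\ p = c s /\ pbar = lerp a b (s / d x y).

Definition CAT0 : Prop :=
  forall (x1 x2 x3 : X) (c12 c23 c31 : R -> X) (a1 a2 a3 : R * R),
    geodesic x1 x2 c12 -> geodesic x2 x3 c23 -> geodesic x3 x1 c31 ->
    eucl a1 a2 = d x1 x2 -> eucl a2 a3 = d x2 x3 -> eucl a3 a1 = d x3 x1 ->
    forall p pbar q qbar,
      (on_side x1 x2 c12 a1 a2 p pbar \/ on_side x2 x3 c23 a2 a3 p pbar \/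
       on_side x3 x1 c31 a3 a1 p pbar) ->
      (on_side x1 x2 c12 a1 a2 q qbar \/ on_side x2 x3 c23 a2 a3 q qbar \/
       on_side x3 x1 c31 a3 a1 q qbar) ->
      d p q <= eucl pbar qbar.

Definition hadamard : Prop :=
  is_metric /\ d_complete /\ geodesic_space /\ CAT0.

(* z = lam x (+) (1 - lam) y : the point z on the geodesic segment from x to y
   with d z x = (1 - lam) d x y and d z y = lam d x y. *)
Definition convcomb (lam : R) (x y z : X) : Prop :=
  (exists c s, geodesic x y c /\ 0 <= s <= d x y /\ z = c s) /\
  d z x = (1 - lam) * d x y /\ d z y = lam * d x y.

Definition h_closed_set (C : X -> Prop) : Prop :=
  forall s z, (forall n, C (s n)) -> d_converges_to s z -> C z.

Definition h_convex_set (C : X -> Prop) : Prop :=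
  forall x y c, C x -> C y -> geodesic x y c ->
    forall s, 0 <= s <= d x y -> C (c s).

Definition is_metric_projection (C : X -> Prop) (P : X -> X) : Prop :=
  forall z, C (P z) /\ forall w, C w -> d z (P z) <= d z w.

Definition nonexpansive_on (C : X -> Prop) (T : X -> X) : Prop :=
  (forall x, C x -> C (T x)) /\
  forall x y, C x -> C y -> d (T x) (T y) <= d x y.

End Hadamard.

From Stdlib Require Import Reals Lra Lia Psatz ClassicalEpsilon.
From Coquelicot Require Import Coquelicot.
Open Scope R_scope.

(* For [t] in [(0, 1)] let [z_t] be the fixed point of the contraction
   [z |-> P_C (t o (+) (1 - t) T z)]. The (CN) inequality and the
   Pythagorean property of [P_C] show that along [t_k = 2^-(k^2+1)] the
   points [z_{t_k}] form a Cauchy sequence, whose limit [q] is a fixed point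
   of [T] satisfying the variational inequality
   [d(w, q)^2 - d(w, o)^2 + d(o, q)^2 <= delta] for bounded [w] in [C] with
   [d(w, T w)] small enough. For the iterates, [s_n = d(x_n, q)^2] obeys
   [s_(n+1) <= (1 - a_n b_n) s_n + a_n b_n v_n + e_n - g_n] with summable
   [e_n], where [g_n >= 0] measures the distance of [x_n] and [y_n] to
   [P_C y_n]; when [g_n] is small, [x_n] is nearly fixed by [T], so [v_n] is
   small by the variational inequality. A lemma of Xu type on such
   recursions then gives [s_n -> 0]. *)

(** * Real inequalities *)

Lemma le_of_pow2_le (a b : R) : 0 <= b -> a ^ 2 <= b ^ 2 -> a <= b.
Proof. intros; nra. Qed.

Lemma le_of_forall_lt1 (a b c : R) : 0 <= b ->
  (forall t, 0 < t < 1 -> a + (1 - t) * b <= c) -> a + b <= c.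
Proof.
  intros Hb H. apply Rnot_lt_le. intro Hlt.
  set (t := Rmin (1 / 2) ((a + b - c) / (2 * (b + 1)))).
  assert (Ht : 0 < t) by (apply Rmin_pos; [lra | apply Rdiv_lt_0_compat; lra]).
  assert (Htb : t * (b + 1) <= (a + b - c) / 2).
  { apply Rle_trans with ((a + b - c) / (2 * (b + 1)) * (b + 1)).
    - apply Rmult_le_compat_r; [lra | apply Rmin_r].
    - right. field. lra. }
  assert (Ht1 : t <= 1 / 2) by apply Rmin_l.
  pose proof (H t ltac:(lra)). lra.
Qed.

Lemma sqr_le_add (x a b r M : R) : 0 <= x <= a + b -> 0 <= a <= M -> 0 <= b <= r -> r <= M ->
  x ^ 2 <= a ^ 2 + 3 * M * r.
Proof.
  intros Hx Ha Hb HrM. apply Rle_trans with ((a + b) ^ 2); [apply pow_incr; lra|].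
  assert (a * b <= M * r) by (apply Rmult_le_compat; lra).
  assert (b * b <= r * M) by (apply Rmult_le_compat; lra).
  nra.
Qed.

Lemma small_of_weighted_sqr (bt A B b0 b1 r : R) : 0 < b0 -> 0 < b1 -> b0 <= bt <= 1 - b1 ->
  0 <= A -> 0 <= B -> 0 <= r ->
  bt * (1 - bt) * A ^ 2 + bt * B ^ 2 < b0 * b1 * r ^ 2 -> A < r /\ B < r.
Proof.
  intros Hb0 Hb1 Hbt HA HB Hr H.
  assert (Hw : b0 * b1 <= bt * (1 - bt)) by (apply Rmult_le_compat; lra).
  assert (b0 * b1 * A ^ 2 <= bt * (1 - bt) * A ^ 2) by (apply Rmult_le_compat_r; [apply pow2_ge_0 | lra]).
  assert (b0 * b1 * B ^ 2 <= bt * B ^ 2).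
  { apply Rmult_le_compat_r; [apply pow2_ge_0|]. apply Rle_trans with (b0 * 1); [|lra].
    apply Rmult_le_compat_l; lra. }
  assert (0 <= bt * (1 - bt) * A ^ 2) by (apply Rmult_le_pos; [nra | apply pow2_ge_0]).
  assert (0 <= bt * B ^ 2) by (apply Rmult_le_pos; [lra | apply pow2_ge_0]).
  assert (0 < b0 * b1) by nra.
  split; apply Rnot_le_lt; intro Hge;
    assert (r ^ 2 <= _ ^ 2) by (apply pow_incr; split; [exact Hr | exact Hge]); nra.
Qed.

Lemma sqr_sub_le (a b D : R) : 0 <= a -> 0 <= b -> 0 <= D -> a - b <= D -> a ^ 2 - b ^ 2 <= D * (a + b).
Proof. intros. nra. Qed.

(** * Real sequences *)

Fixpoint partial_sum (f : nat -> R) (n : nat) : R :=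
  match n with O => 0 | S m => partial_sum f m + f m end.

Lemma partial_sum_S f n : partial_sum f (S n) = sum_n f n.
Proof.
  induction n as [|n IH]; [simpl; rewrite sum_O; ring|].
  change (partial_sum f (S (S n))) with (partial_sum f (S n) + f (S n)).
  now rewrite IH, sum_Sn.
Qed.

Lemma partial_sum_le_mono f m n : (forall k, 0 <= f k) -> (m <= n)%nat ->
  partial_sum f m <= partial_sum f n.
Proof. intros Hf H. induction H; [lra|]. simpl. pose proof (Hf m0). lra. Qed.

Lemma partial_sum_le_Series f n : (forall k, 0 <= f k) -> ex_series f ->
  partial_sum f n <= Series f.
Proof.
  intros Hf Hs. apply Rle_trans with (partial_sum f (S n)).
  - apply partial_sum_le_mono; auto.
  - rewrite partial_sum_S. apply is_lim_seq_incr_compare; [apply Series_correct, Hs|].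
    intro k. rewrite sum_Sn. pose proof (Hf (S k)). unfold plus; simpl. lra.
Qed.

Lemma partial_sum_tail_small f eps : ex_series f -> 0 < eps ->
  exists N, forall m n, (N <= m)%nat -> (m <= n)%nat -> partial_sum f n - partial_sum f m <= eps.
Proof.
  intros Hs Heps. assert (Hl : is_lim_seq (sum_n f) (Series f)) by exact (Series_correct f Hs).
  apply is_lim_seq_spec in Hl.
  destruct (Hl (mkposreal (eps / 2) ltac:(lra))) as [N HN]; simpl in HN.
  exists (S N). intros [|m] [|n] Hm Hmn; try lia.
  pose proof (HN m ltac:(lia)) as Hm'. pose proof (HN n ltac:(lia)) as Hn'.
  rewrite <- partial_sum_S in Hm', Hn'. apply Rabs_def2 in Hm', Hn'. lra.
Qed.

Lemma is_lim_seq_0_of_le (t : nat -> R) : (forall n, 0 <= t n) ->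
  (forall eps, 0 < eps -> exists N, forall n, (N <= n)%nat -> t n <= eps) -> is_lim_seq t 0.
Proof.
  intros Ht H. apply is_lim_seq_spec. intro eps.
  destruct (H (eps / 2)) as [N HN]; [pose proof (cond_pos eps); lra|].
  exists N. intros n Hn. specialize (HN n Hn). pose proof (Ht n). pose proof (cond_pos eps).
  rewrite Rminus_0_r, Rabs_pos_eq; lra.
Qed.

Section Xu_lemma.
Variables (t e gam : nat -> R) (N1 : nat).
Hypothesis Ht : forall n, 0 <= t n.
Hypothesis He : forall n, 0 <= e n.
Hypothesis Hgam : forall n, 0 <= gam n.
Hypothesis Hsum_e : ex_series e.
Hypothesis Hsum_gam : is_lim_seq (sum_n gam) p_infty.
Hypothesis Hrec : forall n, (N1 <= n)%nat -> t (S n) <= (1 - gam n) * t n + e n.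

Let w n := t n - partial_sum e n.

Lemma xu_w_decr n : (N1 <= n)%nat -> w (S n) <= w n - gam n * t n.
Proof. intro Hn. unfold w. simpl. specialize (Hrec n Hn). lra. Qed.

Lemma xu_w_mono m j : (N1 <= m)%nat -> w (m + j)%nat <= w m.
Proof.
  intro Hm. induction j; [rewrite Nat.add_0_r; lra|]. rewrite Nat.add_succ_r.
  pose proof (xu_w_decr (m + j) ltac:(lia)).
  pose proof (Ht (m + j)%nat). pose proof (Hgam (m + j)%nat). nra.
Qed.

(* Otherwise [w] would decrease by [eps * gam n] at each step, and [w >= - Series e]. *)
Lemma xu_frequently_small eps M0 : 0 < eps -> exists m, (M0 <= m)%nat /\ t m <= eps.
Proof.
  intro Heps. apply Classical_Prop.NNPP. intro Hno.
  set (M := (N1 + M0)%nat).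
  assert (Hbig : forall n, (M <= n)%nat -> eps < t n).
  { intros n Hn. apply Rnot_le_lt. intro Hle. apply Hno. exists n. split; [lia | exact Hle]. }
  assert (Hdrop : forall j, w (M + j)%nat <= w M - eps * (partial_sum gam (M + j) - partial_sum gam M)).
  { induction j; [rewrite Nat.add_0_r; lra|]. rewrite Nat.add_succ_r.
    pose proof (xu_w_decr (M + j) ltac:(lia)). pose proof (Hbig (M + j)%nat ltac:(lia)).
    pose proof (Hgam (M + j)%nat). simpl. nra. }
  apply is_lim_seq_spec in Hsum_gam.
  destruct (Hsum_gam (partial_sum gam M + (w M + Series e + 1) / eps)) as [N HN].
  specialize (HN (M + N)%nat ltac:(lia)). rewrite <- partial_sum_S in HN.
  specialize (Hdrop (S N)). rewrite Nat.add_succ_r in Hdrop.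
  assert (w (S (M + N)) >= - Series e).
  { unfold w. pose proof (Ht (S (M + N))). pose proof (partial_sum_le_Series e (S (M + N)) He Hsum_e). lra. }
  assert (eps * ((w M + Series e + 1) / eps) = w M + Series e + 1) by (field; lra).
  nra.
Qed.

Lemma xu_lemma : is_lim_seq t 0.
Proof.
  apply is_lim_seq_0_of_le; [exact Ht|]. intros eps Heps.
  destruct (partial_sum_tail_small e (eps / 2) Hsum_e ltac:(lra)) as [N3 HN3].
  destruct (xu_frequently_small (eps / 2) (N1 + N3) ltac:(lra)) as [m [Hm Htm]].
  exists m. intros n Hn.
  pose proof (xu_w_mono m (n - m) ltac:(lia)). replace (m + (n - m))%nat with n in * by lia.
  pose proof (HN3 m n ltac:(lia) Hn). unfold w in *. lra.
Qed.

End Xu_lemma.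

Lemma is_lim_seq_sum_n_scal_r (u : nat -> R) (a : R) : 0 < a ->
  is_lim_seq (sum_n u) p_infty -> is_lim_seq (sum_n (fun n => u n * a)) p_infty.
Proof.
  intros Ha Hu.
  assert (E : forall n, sum_n (fun k => u k * a) n = sum_n u n * a).
  { induction n as [|n IH]; [now rewrite !sum_O|].
    rewrite !sum_Sn, IH. unfold plus; simpl. ring. }
  apply is_lim_seq_spec in Hu. apply is_lim_seq_spec. intro M.
  destruct (Hu (M / a)) as [N HN]. exists N. intros n Hn.
  rewrite E. specialize (HN n Hn).
  apply Rmult_lt_compat_r with (r := a) in HN; [|exact Ha].
  replace (M / a * a) with M in HN by (field; lra). exact HN.
Qed.

Lemma shifted_recursion_step (s s' c g b e eta delta theta : R) :
  0 <= s -> 0 <= g <= c -> c <= 1 -> 0 <= e -> 0 <= eta -> 0 < delta -> 0 < theta ->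
  s' <= (1 - c) * s + c * b + e - eta -> (eta < theta -> b <= delta) ->
  c * b + g * s + e <= theta / 2 ->
  Rmax (s' - delta) 0 <= (1 - g) * Rmax (s - delta) 0 + e.
Proof.
  intros Hs Hg Hc He Heta Hdelta Htheta Hrec Hb Hsmall.
  pose proof (Rmax_l (s - delta) 0). pose proof (Rmax_r (s - delta) 0).
  assert (Ht : Rmax (s - delta) 0 <= s) by (apply Rmax_lub; lra).
  assert (0 <= (1 - g) * Rmax (s - delta) 0) by (apply Rmult_le_pos; lra).
  apply Rmax_lub; [|lra].
  destruct (Rlt_le_dec eta theta) as [Hlt|Hge].
  - specialize (Hb Hlt).
    assert (c * b <= c * delta) by (apply Rmult_le_compat_l; lra).
    assert ((1 - c) * (s - delta) <= (1 - c) * Rmax (s - delta) 0) by (apply Rmult_le_compat_l; lra).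
    assert (g * Rmax (s - delta) 0 <= c * Rmax (s - delta) 0) by (apply Rmult_le_compat_r; lra).
    nra.
  - assert (g * Rmax (s - delta) 0 <= g * s) by (apply Rmult_le_compat_l; lra).
    assert (0 <= c * s) by nra.
    nra.
Qed.

(* Where [eta n] is small, [b n] is small; where it is not, [s] drops by a
   fixed amount. Either way [max (s n - delta) 0] obeys Xu's recursion. *)
Lemma perturbed_recursion_lim (s al be b e eta : nat -> R) (b0 Sb Bb : R) (N0 : nat) :
  (forall n, 0 <= s n <= Sb) -> (forall n, 0 <= al n <= 1) ->
  is_lim_seq al 0 -> is_lim_seq (sum_n al) p_infty ->
  (forall n, 0 <= be n <= 1) -> 0 < b0 -> (forall n, (N0 <= n)%nat -> b0 <= be n) ->
  0 <= Bb -> (forall n, b n <= Bb) ->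
  (forall n, 0 <= e n) -> ex_series e -> (forall n, 0 <= eta n) ->
  (forall n, s (S n) <= (1 - al n * be n) * s n + al n * be n * b n + e n - eta n) ->
  (forall delta, 0 < delta -> exists theta, 0 < theta /\
     exists N, forall n, (N <= n)%nat -> eta n < theta -> b n <= delta) ->
  is_lim_seq s 0.
Proof.
  intros Hs Hal Hal0 Hdiv Hbe Hb0 HbN0 HBb Hb He Hse Heta Hrec Hsmall.
  apply is_lim_seq_0_of_le; [intro n; apply Hs|]. intros eps Heps.
  destruct (Hsmall (eps / 2) ltac:(lra)) as [theta [Htheta [N HN]]].
  assert (Hlim : is_lim_seq (fun n => al n * (Bb + Sb) + e n) 0).
  { replace (Finite 0) with (Finite (0 * (Bb + Sb) + 0)) by (f_equal; ring).
    apply is_lim_seq_plus'; [apply (is_lim_seq_scal_r al (Bb + Sb) 0) | apply ex_series_lim_0]; auto. }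
  apply is_lim_seq_spec in Hlim. destruct (Hlim (mkposreal (theta / 2) ltac:(lra))) as [N' HN'].
  set (t := fun n => Rmax (s n - eps / 2) 0).
  assert (Ht : is_lim_seq t 0).
  { apply (xu_lemma t e (fun n => al n * b0) (N + N0 + N')).
    - intro n. apply Rmax_r.
    - exact He.
    - intro n. pose proof (Hal n). nra.
    - exact Hse.
    - now apply is_lim_seq_sum_n_scal_r.
    - intros n Hn. specialize (HN' n ltac:(lia)); simpl in HN'.
      rewrite Rminus_0_r in HN'. apply Rabs_def2 in HN'.
      pose proof (Hal n). pose proof (Hbe n). pose proof (HbN0 n ltac:(lia)).
      pose proof (Hs n). pose proof (Hb n). pose proof (He n). pose proof (Heta n).
      apply (shifted_recursion_step _ _ (al n * be n) _ (b n) _ (eta n) _ theta);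
        try solve [apply Hrec | nra | apply HN; lia].
      assert (al n * be n * b n <= al n * be n * Bb) by (apply Rmult_le_compat_l; [apply Rmult_le_pos |]; lra).
      assert (al n * be n * Bb <= al n * Bb)
        by (rewrite Rmult_assoc; apply Rmult_le_compat_l; nra).
      assert (al n * b0 * s n <= al n * Sb)
        by (rewrite Rmult_assoc; apply Rmult_le_compat_l; nra).
      nra. }
  apply is_lim_seq_spec in Ht. destruct (Ht (mkposreal (eps / 2) ltac:(lra))) as [M HM].
  exists M. intros n Hn. specialize (HM n Hn); simpl in HM.
  unfold t in HM. rewrite Rminus_0_r, Rabs_pos_eq in HM by apply Rmax_r.
  pose proof (Rmax_l (s n - eps / 2) 0). lra.
Qed.

Lemma LimInf_seq_gt_eventually (u : nat -> R) (a : R) : Rbar_lt a (LimInf_seq u) ->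
  exists b, a < b /\ exists N, forall n, (N <= n)%nat -> b < u n.
Proof.
  intro H. destruct (ex_LimInf_seq u) as [l Hl].
  rewrite (is_LimInf_seq_unique _ _ Hl) in H. destruct l as [l| |]; simpl in H, Hl.
  - exists ((a + l) / 2). split; [lra|].
    destruct (Hl (mkposreal ((l - a) / 2) ltac:(lra))) as [_ [N HN]].
    exists N. intros n Hn. specialize (HN n Hn). simpl in HN. lra.
  - exists (a + 1). split; [lra | apply Hl].
  - contradiction.
Qed.

Lemma LimSup_seq_lt_eventually (u : nat -> R) (a : R) : Rbar_lt (LimSup_seq u) a ->
  exists b, b < a /\ exists N, forall n, (N <= n)%nat -> u n < b.
Proof.
  intro H. destruct (ex_LimSup_seq u) as [l Hl].
  rewrite (is_LimSup_seq_unique _ _ Hl) in H. destruct l as [l| |]; simpl in H, Hl.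
  - exists ((a + l) / 2). split; [lra|].
    destruct (Hl (mkposreal ((a - l) / 2) ltac:(lra))) as [_ [N HN]].
    exists N. intros n Hn. specialize (HN n Hn). simpl in HN. lra.
  - contradiction.
  - exists (a - 1). split; [lra | apply Hl].
Qed.

(** * Comparison triangles *)

Lemma eucl_eq (p q : R * R) (r : R) : 0 <= r ->
  (fst p - fst q) ^ 2 + (snd p - snd q) ^ 2 = r ^ 2 -> eucl p q = r.
Proof. intros Hr E. unfold eucl. rewrite E. now apply sqrt_pow2. Qed.

Lemma eucl_sqr (p q : R * R) :
  eucl p q ^ 2 = (fst p - fst q) ^ 2 + (snd p - snd q) ^ 2.
Proof. apply pow2_sqrt, Rplus_le_le_0_compat; apply pow2_ge_0. Qed.

(* Stewart's theorem for the comparison triangle with base [(0,0), (D,0)]. *)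
Lemma stewart_apex (D b c : R) : 0 < D -> 0 <= b -> 0 <= c ->
  c <= D + b -> D <= b + c -> b <= D + c ->
  exists a : R * R, eucl a (0, 0) = b /\ eucl (D, 0) a = c /\
    forall s, eucl (s, 0) a ^ 2 = ((D - s) * b ^ 2 + s * c ^ 2) / D - s * (D - s).
Proof.
  intros HD Hb Hc Hcb HDb HbD.
  set (u := (D ^ 2 + b ^ 2 - c ^ 2) / (2 * D)).
  assert (Hu : - b <= u <= b).
  { unfold u; split; apply Rmult_le_reg_r with (2 * D); try lra;
      unfold Rdiv; rewrite Rmult_assoc, Rinv_l, Rmult_1_r by lra; nra. }
  set (v := sqrt (b ^ 2 - u ^ 2)).
  assert (Hv : v ^ 2 = b ^ 2 - u ^ 2) by (apply pow2_sqrt; nra).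
  exists (u, v). split; [|split].
  - apply eucl_eq; cbn [fst snd]; [lra | nra].
  - apply eucl_eq; cbn [fst snd]; [lra|].
    replace ((0 - v) ^ 2) with (v ^ 2) by ring. rewrite Hv. unfold u. field. lra.
  - intro s. rewrite eucl_sqr; cbn [fst snd].
    replace ((0 - v) ^ 2) with (v ^ 2) by ring. rewrite Hv. unfold u. field. lra.
Qed.

(** * Hadamard spaces *)

Section Hadamard_space.
Variables (X : Type) (d : X -> X -> R).
Hypothesis HM : is_metric X d.

Lemma dist_ge0 x y : 0 <= d x y.
Proof. apply HM. Qed.

Lemma dist_sym x y : d x y = d y x.
Proof. apply HM. Qed.

Lemma dist_triangle x y z : d x z <= d x y + d y z.
Proof. apply HM. Qed.

Lemma dist_xx x : d x x = 0.
Proof. now apply HM. Qed.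

Lemma dist_eq0 x y : d x y = 0 -> x = y.
Proof. apply HM. Qed.

Lemma eq_of_dist_lt x y : (forall eps, 0 < eps -> d x y < eps) -> x = y.
Proof.
  intro H. apply dist_eq0. pose proof (dist_ge0 x y).
  destruct (Req_dec (d x y) 0) as [E|E]; [exact E|].
  specialize (H (d x y)). lra.
Qed.

Lemma convcomb_dist_left lam x y z : convcomb X d lam x y z -> d z x = (1 - lam) * d x y.
Proof. now intros [_ [H _]]. Qed.

Lemma convcomb_dist_right lam x y z : convcomb X d lam x y z -> d z y = lam * d x y.
Proof. now intros [_ [_ H]]. Qed.

Lemma d_converges_of_sqr_lim (s : nat -> X) (z : X) :
  is_lim_seq (fun n => d (s n) z ^ 2) 0 -> d_converges_to X d s z.
Proof.
  intros H eps Heps. apply is_lim_seq_spec in H.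
  destruct (H (mkposreal (eps ^ 2) ltac:(nra))) as [N HN].
  exists N. intros n Hn. specialize (HN n Hn). simpl in HN.
  rewrite Rminus_0_r, Rabs_pos_eq in HN by apply pow2_ge_0.
  pose proof (dist_ge0 (s n) z). nra.
Qed.

Hypothesis Hcomp : d_complete X d.

Lemma cauchy_of_geometric (v : nat -> X) (r a : R) : 0 <= r < 1 ->
  (forall j, d (v (S j)) (v j) <= r ^ j * a) -> d_cauchy X d v.
Proof.
  intros Hr Hstep.
  assert (Ha : 0 <= a) by (pose proof (Hstep 0%nat); pose proof (dist_ge0 (v 1%nat) (v 0%nat)); simpl in *; lra).
  set (A := a / (1 - r)).
  assert (HA : 0 <= A) by (apply Rdiv_le_0_compat; lra).
  assert (Hfar : forall j k, d (v j) (v (j + k)%nat) <= r ^ j * A * (1 - r ^ k)).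
  { intros j k. induction k.
    - rewrite Nat.add_0_r, dist_xx. simpl. lra.
    - eapply Rle_trans; [apply (dist_triangle _ (v (j + k)%nat)) |].
      rewrite Nat.add_succ_r, (dist_sym (v (j + k)%nat)).
      eapply Rle_trans; [apply Rplus_le_compat; [exact IHk | apply Hstep] |].
      right. unfold A. rewrite pow_add. simpl. field. lra. }
  assert (Hfar' : forall j k, d (v j) (v (j + k)%nat) <= r ^ j * A).
  { intros j k. eapply Rle_trans; [apply Hfar|].
    pose proof (pow_le r k ltac:(lra)). pose proof (pow_le r j ltac:(lra)).
    assert (0 <= r ^ j * A) by (apply Rmult_le_pos; auto). nra. }
  intros eps Heps.
  destruct (pow_lt_1_zero r ltac:(rewrite Rabs_pos_eq; lra) (eps / (A + 1)))
    as [N HN]; [apply Rdiv_lt_0_compat; lra|].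
  assert (Hsmall : forall j, (N <= j)%nat -> r ^ j * A < eps).
  { intros j Hj. specialize (HN j Hj). rewrite Rabs_pos_eq in HN by (apply pow_le; lra).
    apply Rle_lt_trans with (r ^ j * (A + 1)); [pose proof (pow_le r j); nra|].
    apply Rmult_lt_compat_r with (r := A + 1) in HN; [|lra].
    unfold Rdiv in HN. rewrite Rmult_assoc, Rinv_l, Rmult_1_r in HN by lra. exact HN. }
  exists N. intros m n Hm Hn.
  destruct (Nat.le_ge_cases m n) as [Hmn|Hmn].
  - replace n with (m + (n - m))%nat by lia. eapply Rle_lt_trans; [apply Hfar' | auto].
  - rewrite dist_sym. replace m with (n + (m - n))%nat by lia.
    eapply Rle_lt_trans; [apply Hfar' | auto].
Qed.

Lemma banach_fixed_point (C : X -> Prop) (F : X -> X) (r : R) (c0 : X) :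
  h_closed_set X d C -> 0 <= r < 1 -> (forall z, C z -> C (F z)) ->
  (forall z z', C z -> C z' -> d (F z) (F z') <= r * d z z') ->
  C c0 -> exists z, C z /\ F z = z.
Proof.
  intros HCcl Hr HFC HFr Hc0.
  set (v := fun j => Nat.iter j F c0).
  assert (vS : forall j, v (S j) = F (v j)) by reflexivity.
  assert (vC : forall j, C (v j)) by (induction j; [exact Hc0 | rewrite vS; auto]).
  assert (Hstep : forall j, d (v (S j)) (v j) <= r ^ j * d (v 1%nat) (v 0%nat)).
  { induction j; [simpl; lra|].
    rewrite (vS (S j)), (vS j). eapply Rle_trans; [apply HFr; auto|].
    rewrite <- vS, <- tech_pow_Rmult, Rmult_assoc. apply Rmult_le_compat_l; lra. }
  destruct (Hcomp v (cauchy_of_geometric v r _ Hr Hstep)) as [z Hz].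
  exists z. split; [exact (HCcl v z vC Hz)|].
  apply eq_of_dist_lt. intros eps Heps.
  destruct (Hz (eps / 2) ltac:(lra)) as [N HN].
  pose proof (HN N (le_n N)). pose proof (HN (S N) (le_S _ _ (le_n N))).
  pose proof (HFr (v N) z (vC N) (HCcl v z vC Hz)).
  pose proof (dist_triangle (F z) (F (v N)) z). rewrite vS in *.
  rewrite (dist_sym (F z) (F (v N))) in *. pose proof (dist_ge0 (v N) z). nra.
Qed.

Lemma cauchy_of_sqr_dist_le (z : nat -> X) (g e : nat -> R) (l : R) :
  Un_cv g l -> Un_cv e 0 ->
  (forall k j, (k < j)%nat -> d (z k) (z j) ^ 2 <= g j - g k + e k) -> d_cauchy X d z.
Proof.
  intros Hg He Hz eps Heps.
  destruct (Hg (eps ^ 2 / 3) ltac:(nra)) as [N1 HN1].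
  destruct (He (eps ^ 2 / 3) ltac:(nra)) as [N2 HN2].
  assert (Hlt : forall k j, (N1 + N2 <= k)%nat -> (k < j)%nat -> d (z k) (z j) < eps).
  { intros k j Hk Hj. specialize (Hz k j Hj).
    specialize (HN1 k ltac:(lia)) as Hgk. specialize (HN1 j ltac:(lia)) as Hgj.
    specialize (HN2 k ltac:(lia)) as Hek. unfold R_dist in *.
    apply Rabs_def2 in Hgk, Hgj, Hek. pose proof (dist_ge0 (z k) (z j)). nra. }
  exists (N1 + N2)%nat. intros m n Hm Hn.
  destruct (Nat.lt_trichotomy m n) as [H|[<-|H]].
  - now apply Hlt.
  - rewrite dist_xx. lra.
  - rewrite dist_sym. now apply Hlt.
Qed.

Hypothesis HG : geodesic_space X d.
Hypothesis HC : CAT0 X d.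

Lemma convcomb_exists lam x y : 0 <= lam <= 1 -> exists z, convcomb X d lam x y z.
Proof.
  intro Hl. destruct (HG x y) as [c Hg]. pose proof (dist_ge0 x y).
  exists (c ((1 - lam) * d x y)). destruct Hg as [H0 [HD Hi]].
  split; [|split].
  - exists c, ((1 - lam) * d x y). repeat split; auto; nra.
  - rewrite <- H0 at 2. rewrite Hi by nra. rewrite Rminus_0_r. apply Rabs_pos_eq; nra.
  - rewrite <- HD at 2. rewrite Hi by nra.
    replace ((1 - lam) * d x y - d x y) with (- (lam * d x y)) by ring.
    rewrite Rabs_Ropp. apply Rabs_pos_eq; nra.
Qed.

Definition convcomb_pt (lam : R) (a b : X) : X :=
  epsilon (inhabits a) (fun z => convcomb X d lam a b z).

Lemma convcomb_ptP lam a b : 0 <= lam <= 1 -> convcomb X d lam a b (convcomb_pt lam a b).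
Proof. intro Hl. unfold convcomb_pt. apply epsilon_spec, convcomb_exists, Hl. Qed.

(* The (CN) inequality of Bruhat and Tits, read off from the comparison
   triangle of [x], [y], [w] by Stewart's theorem. *)
Lemma convcomb_dist_sqr lam x y z w : convcomb X d lam x y z ->
  d w z ^ 2 <= lam * d w x ^ 2 + (1 - lam) * d w y ^ 2 - lam * (1 - lam) * d x y ^ 2.
Proof.
  intros [[c [s [Hg [Hs ->]]]] [Hzx _]].
  pose proof (dist_triangle x y w). pose proof (dist_triangle y x w).
  pose proof (dist_triangle x w y). rewrite (dist_sym y x), (dist_sym w y) in *.
  pose proof (dist_ge0 x y) as HD0. set (D := d x y) in *.
  destruct (Req_dec D 0) as [D0|Dn].
  { assert (Exy : x = y) by now apply dist_eq0. subst y.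
    assert (Ezx : c s = x) by (apply dist_eq0; rewrite Hzx, D0; ring).
    rewrite Ezx, D0, (dist_sym x w). apply Req_le. ring. }
  assert (HD : 0 < D) by lra.
  assert (Es : s = (1 - lam) * D).
  { destruct Hg as [Hc0 [_ Hiso]]. rewrite <- Hzx, <- Hc0.
    rewrite Hiso by (fold D; lra). rewrite Rminus_0_r. symmetry; apply Rabs_pos_eq; lra. }
  destruct (stewart_apex D (d x w) (d y w)) as [[a b] [E31 [E23 Hst]]];
    try (apply dist_ge0 || lra).
  destruct (HG y w) as [c23 Hg23]. destruct (HG w x) as [c31 Hg31].
  assert (E12 : eucl (0, 0) (D, 0) = D) by (apply eucl_eq; cbn [fst snd]; lra).
  rewrite (dist_sym x w) in E31.
  assert (Hcs : d (c s) w <= eucl (s, 0) (a, b)).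
  { replace (s, 0) with (lerp (0, 0) (D, 0) (s / D))
      by (unfold lerp; cbn [fst snd]; f_equal; field; lra).
    apply (HC x y w c c23 c31 (0, 0) (D, 0) (a, b) Hg Hg23 Hg31 E12 E23 E31).
    - left. exists s. fold D. repeat split; lra.
    - right; right. exists 0. split; [split; [lra | apply dist_ge0]|]. split.
      + symmetry; apply Hg31.
      + unfold lerp; cbn [fst snd]. f_equal; unfold Rdiv; ring. }
  assert (Hcs2 := pow_incr _ _ 2 (conj (dist_ge0 (c s) w) Hcs)).
  rewrite Hst in Hcs2. rewrite (dist_sym w (c s)), (dist_sym w x).
  replace (lam * d x w ^ 2 + (1 - lam) * d y w ^ 2 - lam * (1 - lam) * D ^ 2)
    with (((D - s) * d x w ^ 2 + s * d y w ^ 2) / D - s * (D - s))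
    by (rewrite Es; field; lra).
  exact Hcs2.
Qed.

Lemma convcomb_dist_le lam x y z w : 0 <= lam <= 1 -> convcomb X d lam x y z ->
  d w z <= lam * d w x + (1 - lam) * d w y.
Proof.
  intros Hl Hc. pose proof (convcomb_dist_sqr lam x y z w Hc) as H.
  apply le_of_pow2_le; [pose proof (dist_ge0 w x); pose proof (dist_ge0 w y); nra|].
  assert ((d w x - d w y) ^ 2 <= d x y ^ 2).
  { pose proof (dist_triangle w x y). pose proof (dist_triangle w y x).
    rewrite (dist_sym y x) in *.
    replace ((d w x - d w y) ^ 2) with (Rabs (d w x - d w y) ^ 2)
      by (rewrite <- Rsqr_pow2, <- Rsqr_abs, Rsqr_pow2; reflexivity).
    apply pow_incr. split; [apply Rabs_pos | apply Rabs_le; lra]. }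
  assert (0 <= lam * (1 - lam)) by nra. nra.
Qed.

Lemma convcomb_dist_common_right lam a b v z1 z2 : 0 <= lam ->
  convcomb X d lam a v z1 -> convcomb X d lam b v z2 -> d z1 z2 <= lam * d a b.
Proof.
  intros Hl H1 H2.
  apply le_of_pow2_le; [pose proof (dist_ge0 a b); nra|].
  pose proof (convcomb_dist_sqr _ _ _ _ z2 H1) as C1.
  pose proof (convcomb_dist_sqr _ _ _ _ a H2) as C2.
  rewrite (dist_sym z1 z2), (convcomb_dist_right _ _ _ _ H2) in *.
  rewrite (dist_sym a z2) in C2.
  assert (lam * d z2 a ^ 2 <= lam * (lam * d a b ^ 2 + (1 - lam) * d a v ^ 2
                                     - lam * (1 - lam) * d b v ^ 2))
    by (apply Rmult_le_compat_l; auto).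
  nra.
Qed.

Lemma convcomb_dist_common_left lam o v v' z1 z2 : lam <= 1 ->
  convcomb X d lam o v z1 -> convcomb X d lam o v' z2 -> d z1 z2 <= (1 - lam) * d v v'.
Proof.
  intros Hl H1 H2.
  apply le_of_pow2_le; [pose proof (dist_ge0 v v'); nra|].
  pose proof (convcomb_dist_sqr _ _ _ _ z2 H1) as C1.
  pose proof (convcomb_dist_sqr _ _ _ _ v H2) as C2.
  rewrite (dist_sym z1 z2), (convcomb_dist_left _ _ _ _ H2) in *.
  rewrite (dist_sym v z2), (dist_sym v o) in C2.
  assert ((1 - lam) * d z2 v ^ 2 <= (1 - lam) * (lam * d o v ^ 2 + (1 - lam) * d v v' ^ 2
                                                 - lam * (1 - lam) * d o v' ^ 2))
    by (apply Rmult_le_compat_l; [lra | exact C2]).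
  nra.
Qed.

(* Both sides are compared with twice the squared distances to the midpoint of [x, b]. *)
Lemma quadrilateral_ineq x y a b :
  d x b ^ 2 + d y a ^ 2 <= d x a ^ 2 + d y b ^ 2 + d x y ^ 2 + d a b ^ 2.
Proof.
  destruct (convcomb_exists (1 / 2) x b) as [m Hm]; [lra|].
  pose proof (convcomb_dist_sqr _ _ _ _ a Hm) as C1.
  pose proof (convcomb_dist_sqr _ _ _ _ y Hm) as C2.
  pose proof (dist_triangle y m a). pose proof (dist_ge0 y m). pose proof (dist_ge0 m a).
  assert (d y a ^ 2 <= 2 * d y m ^ 2 + 2 * d m a ^ 2).
  { assert (d y a ^ 2 <= (d y m + d m a) ^ 2) by (apply pow_incr; split; [apply dist_ge0 | lra]).
    pose proof (pow2_ge_0 (d y m - d m a)). nra. }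
  rewrite (dist_sym m a), (dist_sym a x), (dist_sym y x) in *. nra.
Qed.

Section Projection.
Variables (C : X -> Prop) (P : X -> X).
Hypothesis HCcv : h_convex_set X d C.
Hypothesis HP : is_metric_projection X d C P.

Lemma proj_mem z : C (P z).
Proof. apply HP. Qed.

Lemma convcomb_mem lam a b z : C a -> C b -> convcomb X d lam a b z -> C z.
Proof. intros Ha Hb [[c [s [Hg [Hs ->]]]] _]. exact (HCcv a b c Ha Hb Hg s Hs). Qed.

(* Minimality of [P y] against the points [(1 - t) P y (+) t w] of [C]. *)
Lemma proj_dist_sqr y w : C w -> d y (P y) ^ 2 + d (P y) w ^ 2 <= d y w ^ 2.
Proof.
  intro Hw. apply le_of_forall_lt1; [apply pow2_ge_0|]. intros t Ht.
  destruct (convcomb_exists (1 - t) (P y) w) as [z Hz]; [lra|].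
  assert (Hmin : d y (P y) <= d y z) by (apply HP, (convcomb_mem _ _ _ _ (proj_mem y) Hw Hz)).
  pose proof (convcomb_dist_sqr _ _ _ _ y Hz) as Cn.
  replace (1 - (1 - t)) with t in Cn by ring.
  assert (d y (P y) ^ 2 <= d y z ^ 2) by (apply pow_incr; split; [apply dist_ge0 | exact Hmin]).
  assert (t * (d y (P y) ^ 2 + (1 - t) * d (P y) w ^ 2) <= t * d y w ^ 2) by nra.
  apply Rmult_le_reg_l with t; lra.
Qed.

Lemma proj_nonexpansive a b : d (P a) (P b) <= d a b.
Proof.
  pose proof (proj_dist_sqr a (P b) (proj_mem b)) as H1.
  pose proof (proj_dist_sqr b (P a) (proj_mem a)) as H2.
  pose proof (quadrilateral_ineq a b (P a) (P b)) as Q.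
  apply le_of_pow2_le; [apply dist_ge0|].
  rewrite (dist_sym (P b) (P a)) in H2. nra.
Qed.

Section Approximating_curve.
Hypothesis HCcl : h_closed_set X d C.
Variables (T : X -> X) (o p0 : X).
Hypothesis HT : nonexpansive_on X d C T.
Hypothesis Hp0C : C p0.
Hypothesis Hp0T : T p0 = p0.

Lemma nonexp_mem z : C z -> C (T z).
Proof. apply HT. Qed.

Lemma nonexp_dist z w : C z -> C w -> d (T z) (T w) <= d z w.
Proof. apply HT. Qed.

Lemma dist_T_le z w : C z -> C w -> d (T z) w <= d z w + d w (T w).
Proof.
  intros Hz Hw. pose proof (dist_triangle (T z) (T w) w).
  pose proof (nonexp_dist z w Hz Hw). rewrite (dist_sym (T w) w) in *. lra.
Qed.

(* The fixed point [z_t] of [z |-> P (t o (+) (1 - t) T z)] satisfies this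
   inequality for all [w] in [C]; nothing else about [z_t] is used. *)
Definition approximant (t : R) (z : X) : Prop :=
  C z /\ forall w, C w ->
    d z w ^ 2 <= t * d o w ^ 2 + (1 - t) * d (T z) w ^ 2 - t * (1 - t) * d o (T z) ^ 2.

Lemma approximant_exists t : 0 < t < 1 -> exists z, approximant t z.
Proof.
  intro Ht. set (F := fun z => P (convcomb_pt t o (T z))).
  destruct (banach_fixed_point C F (1 - t) p0) as [z [Cz Fz]]; auto; try lra.
  - intros z _. apply proj_mem.
  - intros z z' Cz Cz'. eapply Rle_trans; [apply proj_nonexpansive|].
    eapply Rle_trans; [apply (convcomb_dist_common_left t o (T z) (T z'));
                       [lra | apply convcomb_ptP; lra | apply convcomb_ptP; lra]|].
    apply Rmult_le_compat_l; [lra | apply nonexp_dist; auto].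
  - exists z. split; [exact Cz|]. intros w Cw.
    set (v := convcomb_pt t o (T z)).
    assert (Hv : convcomb X d t o (T z) v) by (apply convcomb_ptP; lra).
    pose proof (proj_dist_sqr v w Cw) as H3. unfold F in Fz. fold v in Fz. rewrite Fz in H3.
    pose proof (convcomb_dist_sqr _ _ _ _ w Hv) as H4.
    rewrite (dist_sym w v), (dist_sym w o), (dist_sym w (T z)) in H4.
    pose proof (pow2_ge_0 (d v z)). lra.
Qed.

Lemma approximant_dist_T t z : 0 < t < 1 -> approximant t z -> d z (T z) <= t * d o (T z).
Proof.
  intros Ht [Cz Hz]. specialize (Hz (T z) (nonexp_mem z Cz)). rewrite dist_xx in Hz.
  apply le_of_pow2_le; [pose proof (dist_ge0 o (T z)); nra | nra].
Qed.

Lemma approximant_dist_fixed t z p : 0 < t < 1 -> approximant t z -> C p -> T p = p ->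
  d z p ^ 2 + (1 - t) * d o (T z) ^ 2 <= d o p ^ 2.
Proof.
  intros Ht [Cz Hz] Cp Tp. specialize (Hz p Cp).
  assert (d (T z) p ^ 2 <= d z p ^ 2).
  { apply pow_incr. split; [apply dist_ge0|]. rewrite <- Tp at 1. apply nonexp_dist; auto. }
  assert (t * (d z p ^ 2 + (1 - t) * d o (T z) ^ 2) <= t * d o p ^ 2) by nra.
  apply Rmult_le_reg_l with t; lra.
Qed.

Let K := d o p0.

Lemma approximant_bounds t z : 0 < t <= 1 / 2 -> approximant t z ->
  d z p0 <= K /\ d o (T z) <= 2 * K /\ d z (T z) <= 2 * K * t /\ d o z <= 2 * K.
Proof.
  intros Ht Hz.
  pose proof (approximant_dist_fixed t z p0 ltac:(lra) Hz Hp0C Hp0T) as Hfix. fold K in Hfix.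
  pose proof (dist_ge0 o p0). pose proof (dist_ge0 z p0). pose proof (dist_ge0 o (T z)).
  assert (Hzp : d z p0 <= K) by (apply le_of_pow2_le; [apply dist_ge0 | nra]).
  assert (HoT : d o (T z) <= 2 * K) by (apply le_of_pow2_le; [unfold K; lra | nra]).
  pose proof (approximant_dist_T t z ltac:(lra) Hz).
  pose proof (dist_triangle o p0 z) as Hoz. rewrite (dist_sym p0 z) in Hoz. fold K in Hoz.
  repeat split; nra.
Qed.

Lemma approximant_pair s t z z' : 0 < s <= t -> t <= 1 / 2 ->
  approximant t z -> approximant s z' ->
  d z z' ^ 2 <= d o z' ^ 2 - d o z ^ 2 + 20 * K ^ 2 * (t + s / t).
Proof.
  intros Hst Ht Hz Hz'.
  destruct (approximant_bounds t z ltac:(lra) Hz) as [Bz [BTz [BzTz _]]].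
  destruct (approximant_bounds s z' ltac:(lra) Hz') as [Bz' [_ [Bz'Tz' _]]].
  destruct Hz as [Cz Hz]. destruct Hz' as [Cz' _]. specialize (Hz z' Cz').
  pose proof (dist_ge0 o p0). pose proof (dist_ge0 o (T z)).
  pose proof (dist_triangle z p0 z') as Hzz'. rewrite (dist_sym p0 z') in Hzz'.
  pose proof (dist_triangle o (T z) z) as Hoz. rewrite (dist_sym (T z) z) in Hoz.
  set (D := d z z') in *. set (h := d o (T z)) in *.
  assert (HTz : d (T z) z' ^ 2 <= D ^ 2 + 12 * K ^ 2 * s).
  { replace (12 * K ^ 2 * s) with (3 * (2 * K) * (2 * K * s)) by ring.
    apply sqr_le_add with (d z' (T z')); try split; try apply dist_ge0;
      try apply dist_T_le; auto; nra. }
  assert (Hoz2 : d o z ^ 2 <= h ^ 2 + 12 * K ^ 2 * t).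
  { replace (12 * K ^ 2 * t) with (3 * (2 * K) * (2 * K * t)) by ring.
    apply sqr_le_add with (d z (T z)); try split; try apply dist_ge0; auto; nra. }
  assert (HD2 : D ^ 2 <= d o z' ^ 2 - (1 - t) * h ^ 2 + 12 * K ^ 2 * (s / t)).
  { apply Rmult_le_reg_l with t; [lra|].
    replace (t * (d o z' ^ 2 - (1 - t) * h ^ 2 + 12 * K ^ 2 * (s / t)))
      with (t * d o z' ^ 2 - t * (1 - t) * h ^ 2 + 12 * K ^ 2 * s) by (field; lra).
    assert (0 <= K ^ 2 * s * t) by (pose proof (pow2_ge_0 K); apply Rmult_le_pos; nra).
    nra. }
  assert (t * h ^ 2 <= t * (2 * K) ^ 2) by (apply Rmult_le_compat_l, pow_incr; lra).
  assert (0 <= K ^ 2 * t) by (apply Rmult_le_pos; [apply pow2_ge_0 | lra]).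
  assert (0 <= K ^ 2 * (s / t)) by (apply Rmult_le_pos; [apply pow2_ge_0 | apply Rdiv_le_0_compat; lra]).
  nra.
Qed.

(* [t_k -> 0] while [t_j / t_k <= 2^-k] for [k < j]: the error [t + s / t] of
   [approximant_pair] becomes summable along [t_k]. *)
Definition curve_param (k : nat) : R := / 2 ^ (k * k + 1).

Lemma inv_pow2_le_mono (m n : nat) : (m <= n)%nat -> / 2 ^ n <= / 2 ^ m.
Proof. intro H. apply Rinv_le_contravar; [apply pow_lt; lra | apply Rle_pow; [lra | exact H]]. Qed.

Lemma curve_param_bounds k :
  0 < curve_param k /\ curve_param k <= / 2 ^ k /\ curve_param k <= 1 / 2.
Proof.
  unfold curve_param. repeat split.
  - apply Rinv_0_lt_compat, pow_lt; lra.
  - apply inv_pow2_le_mono; nia.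
  - replace (1 / 2) with (/ 2 ^ 1) by (simpl; field). apply inv_pow2_le_mono; lia.
Qed.

Lemma curve_param_ratio k j : (k < j)%nat -> curve_param j / curve_param k <= / 2 ^ k.
Proof.
  intro H. unfold curve_param.
  replace (j * j + 1)%nat with ((k * k + 1) + (j * j - k * k))%nat by nia.
  rewrite pow_add.
  pose proof (pow_lt 2 (k * k + 1) ltac:(lra)). pose proof (pow_lt 2 (j * j - k * k) ltac:(lra)).
  replace (/ (2 ^ (k * k + 1) * 2 ^ (j * j - k * k)) / / 2 ^ (k * k + 1))
    with (/ 2 ^ (j * j - k * k)) by (field; lra).
  apply inv_pow2_le_mono; nia.
Qed.

Definition curve_pt (k : nat) : X := epsilon (inhabits p0) (approximant (curve_param k)).

Lemma curve_ptP k : approximant (curve_param k) (curve_pt k).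
Proof.
  unfold curve_pt. apply epsilon_spec, approximant_exists.
  pose proof (curve_param_bounds k). lra.
Qed.

Lemma curve_pt_pair k j : (k < j)%nat ->
  d (curve_pt k) (curve_pt j) ^ 2
    <= d o (curve_pt j) ^ 2 - d o (curve_pt k) ^ 2 + 40 * K ^ 2 / 2 ^ k.
Proof.
  intro Hkj. destruct (curve_param_bounds k) as [Hk0 [Hk1 Hk2]].
  destruct (curve_param_bounds j) as [Hj0 _].
  pose proof (curve_param_ratio k j Hkj).
  assert (curve_param j <= curve_param k) by (apply inv_pow2_le_mono; nia).
  eapply Rle_trans; [apply approximant_pair; auto using curve_ptP; lra|].
  replace (40 * K ^ 2 / 2 ^ k) with (20 * K ^ 2 * (2 * / 2 ^ k)) by (unfold Rdiv; ring).
  apply Rplus_le_compat_l, Rmult_le_compat_l; [pose proof (pow2_ge_0 K); lra | lra].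
Qed.

(* [d(o, z_k)^2] increases up to a summable error, hence converges. *)
Lemma curve_norm_cv : exists l, Un_cv (fun k => d o (curve_pt k) ^ 2) l.
Proof.
  set (G := fun k => d o (curve_pt k) ^ 2 - 80 * K ^ 2 / 2 ^ k).
  assert (HGg : Un_growing G).
  { intro k. pose proof (curve_pt_pair k (S k) (Nat.lt_succ_diag_r k)).
    pose proof (pow2_ge_0 (d (curve_pt k) (curve_pt (S k)))).
    pose proof (pow_lt 2 k ltac:(lra)).
    unfold G. replace (80 * K ^ 2 / 2 ^ S k) with (40 * K ^ 2 / 2 ^ k) by (simpl; field; lra).
    lra. }
  assert (HGb : has_ub G).
  { exists (4 * K ^ 2). intros r [k ->]. unfold G.
    destruct (curve_param_bounds k) as [Hk0 [_ Hk2]].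
    destruct (approximant_bounds _ _ (conj Hk0 Hk2) (curve_ptP k)) as [_ [_ [_ Hoz]]].
    assert (d o (curve_pt k) ^ 2 <= (2 * K) ^ 2) by (apply pow_incr; split; [apply dist_ge0 | exact Hoz]).
    assert (0 <= 80 * K ^ 2 / 2 ^ k)
      by (apply Rdiv_le_0_compat; [pose proof (pow2_ge_0 K); lra | apply pow_lt; lra]).
    lra. }
  destruct (growing_cv G HGg HGb) as [l Hl].
  pose proof (CV_plus G _ l 0 Hl (cv_pow_half (80 * K ^ 2))) as Hcv.
  exists l. intros eps Heps. destruct (Hcv eps Heps) as [N HN]. exists N. intros n Hn.
  specialize (HN n Hn). cbv beta in HN. unfold G in HN.
  replace (d o (curve_pt n) ^ 2 - 80 * K ^ 2 / 2 ^ n + 80 * K ^ 2 / 2 ^ n) with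
    (d o (curve_pt n) ^ 2) in HN by ring.
  now rewrite Rplus_0_r in HN.
Qed.

Lemma curve_cauchy : d_cauchy X d curve_pt.
Proof.
  destruct curve_norm_cv as [l Hl].
  exact (cauchy_of_sqr_dist_le curve_pt _ _ l Hl (cv_pow_half (40 * K ^ 2)) curve_pt_pair).
Qed.

Definition curve_limit : X := epsilon (inhabits p0) (d_converges_to X d curve_pt).

Lemma curve_limitP : d_converges_to X d curve_pt curve_limit.
Proof. unfold curve_limit. apply epsilon_spec, Hcomp, curve_cauchy. Qed.

Lemma curve_limit_mem : C curve_limit.
Proof. exact (HCcl curve_pt curve_limit (fun k => proj1 (curve_ptP k)) curve_limitP). Qed.

Lemma curve_approx eps : 0 < eps ->
  exists k, curve_param k < eps /\ d (curve_pt k) curve_limit < eps.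
Proof.
  intro Heps. destruct (curve_limitP eps Heps) as [N1 HN1].
  destruct (cv_pow_half 1 eps Heps) as [N2 HN2].
  exists (N1 + N2)%nat. split; [|apply HN1; lia].
  specialize (HN2 (N1 + N2)%nat ltac:(lia)). unfold R_dist in HN2.
  rewrite Rminus_0_r, Rabs_pos_eq in HN2 by (apply Rlt_le, Rdiv_lt_0_compat, pow_lt; lra).
  destruct (curve_param_bounds (N1 + N2)) as [_ [H _]]. unfold Rdiv in HN2. lra.
Qed.

Lemma curve_limit_fixed : T curve_limit = curve_limit.
Proof.
  apply eq_of_dist_lt. intros eps Heps.
  pose proof (dist_ge0 o p0) as HK. fold K in HK.
  destruct (curve_approx (eps / (2 * K + 3))) as [k [Htk Hzk]];
    [apply Rdiv_lt_0_compat; lra|].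
  destruct (curve_param_bounds k) as [Hk0 [_ Hk2]].
  destruct (approximant_bounds _ _ (conj Hk0 Hk2) (curve_ptP k)) as [_ [_ [HzTz _]]].
  set (q := curve_limit) in *. set (z := curve_pt k) in *.
  pose proof (dist_triangle (T q) (T z) q). pose proof (dist_triangle (T z) z q).
  pose proof (nonexp_dist q z curve_limit_mem (proj1 (curve_ptP k))).
  rewrite (dist_sym (T z) z), (dist_sym q z) in *.
  assert (2 * K * curve_param k <= 2 * K * (eps / (2 * K + 3))) by (apply Rmult_le_compat_l; lra).
  assert ((2 * K + 3) * (eps / (2 * K + 3)) = eps) by (field; lra).
  assert (0 < eps / (2 * K + 3)) by (apply Rdiv_lt_0_compat; lra).
  lra.
Qed.

Lemma approximant_variational t z w B : 0 < t <= 1 / 2 -> approximant t z -> C w ->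
  d w p0 <= B -> d w (T w) <= 1 ->
  d z w ^ 2 - d o w ^ 2 + d o (T z) ^ 2 <= 3 * (K + B + 1) * d w (T w) / t + 4 * K ^ 2 * t.
Proof.
  intros Ht Hz Cw HwB Hw1.
  destruct (approximant_bounds t z ltac:(lra) Hz) as [Bz [BTz _]].
  destruct Hz as [Cz Hz]. specialize (Hz w Cw).
  pose proof (dist_triangle z p0 w). rewrite (dist_sym p0 w) in *.
  pose proof (dist_ge0 o p0) as HK. fold K in HK.
  pose proof (dist_ge0 w (T w)). pose proof (dist_ge0 o (T z)). pose proof (dist_ge0 w p0).
  set (e := d w (T w)) in *. set (h := d o (T z)) in *.
  assert (HTzw : d (T z) w ^ 2 <= d z w ^ 2 + 3 * (K + B + 1) * e).
  { apply sqr_le_add with e; try split; try apply dist_ge0; try apply dist_T_le; auto; lra. }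
  assert (Hmain : d z w ^ 2 - d o w ^ 2 + (1 - t) * h ^ 2 <= 3 * (K + B + 1) * e / t).
  { apply Rmult_le_reg_l with t; [lra|].
    replace (t * (3 * (K + B + 1) * e / t)) with (3 * (K + B + 1) * e) by (field; lra).
    assert (0 <= t * (3 * (K + B + 1) * e)) by (apply Rmult_le_pos; nra).
    nra. }
  assert (t * h ^ 2 <= t * (2 * K) ^ 2) by (apply Rmult_le_compat_l, pow_incr; lra).
  nra.
Qed.

Lemma approximant_to_limit t z w B : 0 < t <= 1 / 2 -> approximant t z -> C w ->
  d w p0 <= B -> d z curve_limit <= 1 ->
  d w curve_limit ^ 2 - d w o ^ 2 + d o curve_limit ^ 2
    <= d z w ^ 2 - d o w ^ 2 + d o (T z) ^ 2 + 3 * (3 * K + B + 2) * d z curve_limit.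
Proof.
  intros Ht Hz Cw Hw Hrho.
  destruct (approximant_bounds t z Ht Hz) as [Bz [BTz _]].
  pose proof (dist_ge0 o p0) as HK. fold K in HK. pose proof (dist_ge0 w p0).
  pose proof (dist_triangle w z curve_limit). pose proof (dist_triangle z p0 w).
  pose proof (dist_triangle o (T z) curve_limit).
  pose proof (nonexp_dist z curve_limit (proj1 Hz) curve_limit_mem) as HTq.
  rewrite curve_limit_fixed in HTq. rewrite (dist_sym w z), (dist_sym p0 w), (dist_sym w o) in *.
  assert (Hwq : d w curve_limit ^ 2 <= d z w ^ 2 + 3 * (K + B + 1) * d z curve_limit)
    by (apply sqr_le_add with (d z curve_limit); repeat split; try apply dist_ge0; lra).
  assert (Hoq : d o curve_limit ^ 2 <= d o (T z) ^ 2 + 3 * (2 * K + 1) * d z curve_limit)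
    by (apply sqr_le_add with (d z curve_limit); repeat split; try apply dist_ge0; lra).
  lra.
Qed.

(* In Hilbert space terms: [<o - q, w - q> <= delta / 2] for bounded nearly fixed [w]. *)
Lemma curve_limit_variational delta B : 0 < delta -> 0 <= B ->
  exists theta, 0 < theta /\ forall w, C w -> d w p0 <= B -> d w (T w) < theta ->
    d w curve_limit ^ 2 - d w o ^ 2 + d o curve_limit ^ 2 <= delta.
Proof.
  intros Hdelta HB. pose proof (dist_ge0 o p0) as HK. fold K in HK.
  set (M := K + B + 1). set (L := 3 * K + B + 2 + 4 * K ^ 2).
  assert (HL : 0 < L) by (unfold L; pose proof (pow2_ge_0 K); lra).
  set (eps0 := Rmin 1 (delta / (9 * L))).
  assert (He0 : 0 < eps0) by (apply Rmin_pos; [lra | apply Rdiv_lt_0_compat; lra]).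
  assert (He1 : eps0 <= 1) by apply Rmin_l.
  assert (HeL : L * eps0 <= delta / 9).
  { apply Rle_trans with (L * (delta / (9 * L))); [apply Rmult_le_compat_l; [lra | apply Rmin_r]|].
    right. field. lra. }
  destruct (curve_approx eps0 He0) as [k [Htk Hzk]].
  destruct (curve_param_bounds k) as [Hk0 [_ Hk2]].
  pose proof (dist_ge0 (curve_pt k) curve_limit).
  exists (Rmin 1 (delta * curve_param k / (9 * M))).
  split; [apply Rmin_pos; [lra | apply Rdiv_lt_0_compat; unfold M; nra]|].
  intros w Cw Hw Hwe.
  pose proof (Rmin_l 1 (delta * curve_param k / (9 * M))).
  pose proof (Rmin_r 1 (delta * curve_param k / (9 * M))).
  pose proof (dist_ge0 w (T w)).
  pose proof (approximant_variational (curve_param k) (curve_pt k) w B ltac:(lra) (curve_ptP k) Cw Hw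
                ltac:(lra)) as Hvar.
  pose proof (approximant_to_limit (curve_param k) (curve_pt k) w B ltac:(lra) (curve_ptP k) Cw Hw
                ltac:(lra)) as Hlim.
  fold M in Hvar.
  assert (He : 3 * M * d w (T w) / curve_param k <= delta / 3).
  { apply Rle_trans with (3 * M * (delta * curve_param k / (9 * M)) / curve_param k).
    - unfold Rdiv. apply Rmult_le_compat_r; [apply Rlt_le, Rinv_0_lt_compat; lra|].
      apply Rmult_le_compat_l; [unfold M; lra | lra].
    - right. unfold M. field. lra. }
  assert (HLe : L * eps0 = (3 * K + B + 2) * eps0 + 4 * (K ^ 2 * eps0)) by (unfold L; ring).
  assert ((3 * K + B + 2) * d (curve_pt k) curve_limit <= (3 * K + B + 2) * eps0)
    by (apply Rmult_le_compat_l; lra).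
  assert (K ^ 2 * curve_param k <= K ^ 2 * eps0) by (apply Rmult_le_compat_l; [apply pow2_ge_0 | lra]).
  assert (0 <= K ^ 2 * eps0) by (apply Rmult_le_pos; [apply pow2_ge_0 | lra]).
  lra.
Qed.

Section Iteration.
Variables (alpha beta : nat -> R) (u x y : nat -> X).
Hypothesis Ha : forall n, 0 < alpha n < 1.
Hypothesis Hb : forall n, 0 < beta n < 1.
Hypothesis Hx0 : C (x 0%nat).
Hypothesis Hy : forall n, convcomb X d (alpha n) (u n) (T (x n)) (y n).
Hypothesis Hx : forall n, convcomb X d (1 - beta n) (x n) (P (y n)) (x (S n)).
Hypothesis Hu : ex_series (fun n => alpha n * d (u n) o).
Hypothesis Ha0 : is_lim_seq alpha 0.
Hypothesis Ha_sum : is_lim_seq (sum_n alpha) p_infty.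

Lemma iterate_mem n : C (x n).
Proof.
  induction n as [|n IH]; [exact Hx0|].
  exact (convcomb_mem _ _ _ _ IH (proj_mem (y n)) (Hx n)).
Qed.

Let pert n := alpha n * d (u n) o.
Let Lp := Series pert.

Lemma pert_ge0 n : 0 <= pert n.
Proof. pose proof (Ha n). pose proof (dist_ge0 (u n) o). unfold pert. nra. Qed.

Lemma pert_partial_le n : 0 <= partial_sum pert n <= Lp.
Proof.
  split; [|exact (partial_sum_le_Series pert n pert_ge0 Hu)].
  change 0 with (partial_sum pert 0). apply partial_sum_le_mono; [exact pert_ge0 | lia].
Qed.

Lemma pert_le n : pert n <= Lp.
Proof. pose proof (pert_partial_le (S n)). pose proof (pert_partial_le n). simpl in *. lra. Qed.

Lemma fixed_dist_y n : d p0 (y n) <= alpha n * (K + d (u n) o) + (1 - alpha n) * d p0 (x n).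
Proof.
  pose proof (Ha n).
  eapply Rle_trans; [apply (convcomb_dist_le (alpha n) _ _ _ p0 ltac:(lra) (Hy n))|].
  assert (d p0 (u n) <= K + d (u n) o).
  { pose proof (dist_triangle p0 o (u n)). rewrite (dist_sym p0 o), (dist_sym o (u n)) in *. unfold K. lra. }
  assert (d p0 (T (x n)) <= d p0 (x n)).
  { rewrite <- Hp0T at 1. apply nonexp_dist; [exact Hp0C | apply iterate_mem]. }
  nra.
Qed.

Lemma iterate_dist_step n : d (x (S n)) p0 <= Rmax (d (x n) p0) K + pert n.
Proof.
  pose proof (Ha n). pose proof (Hb n).
  rewrite dist_sym. eapply Rle_trans; [apply (convcomb_dist_le (1 - beta n) _ _ _ p0 ltac:(lra) (Hx n))|].
  assert (HPy : d p0 (P (y n)) <= d p0 (y n)).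
  { pose proof (proj_dist_sqr (y n) p0 Hp0C).
    rewrite (dist_sym (y n) p0), (dist_sym (P (y n)) p0) in *.
    apply le_of_pow2_le; [apply dist_ge0|]. pose proof (pow2_ge_0 (d (y n) (P (y n)))). lra. }
  pose proof (fixed_dist_y n). rewrite (dist_sym p0 (x n)) in *.
  pose proof (Rmax_l (d (x n) p0) K). pose proof (Rmax_r (d (x n) p0) K).
  pose proof (dist_ge0 (x n) p0). pose proof (dist_ge0 (u n) o). pose proof (pert_ge0 n).
  unfold pert in *. replace (1 - (1 - beta n)) with (beta n) by ring.
  set (Mx := Rmax (d (x n) p0) K) in *.
  assert (alpha n * K + (1 - alpha n) * d (x n) p0 <= Mx) by nra.
  assert (beta n * (alpha n * K + (1 - alpha n) * d (x n) p0) <= beta n * Mx)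
    by (apply Rmult_le_compat_l; lra).
  assert ((1 - beta n) * d (x n) p0 <= (1 - beta n) * Mx) by (apply Rmult_le_compat_l; lra).
  assert (beta n * (alpha n * d (u n) o) <= alpha n * d (u n) o) by nra.
  nra.
Qed.

Let Bx := Rmax (d (x 0%nat) p0) K + Lp.

Lemma iterate_bounded n : d (x n) p0 <= Bx.
Proof.
  assert (H : forall m, d (x m) p0 <= Rmax (d (x 0%nat) p0) K + partial_sum pert m).
  { clear n. induction m as [|n IH]; [simpl; pose proof (Rmax_l (d (x 0%nat) p0) K); lra|].
    eapply Rle_trans; [apply iterate_dist_step|]. simpl. rewrite <- Rplus_assoc.
    apply Rplus_le_compat_r, Rmax_lub; [exact IH|].
    pose proof (Rmax_r (d (x 0%nat) p0) K). pose proof (pert_partial_le n). lra. }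
  pose proof (H n). pose proof (pert_partial_le n). unfold Bx. lra.
Qed.

Let q := curve_limit.

(* The iteration with [u n] replaced by the anchor [o]; [y n] stays within
   [pert n] of it. *)
Definition anchor n := convcomb_pt (alpha n) o (T (x n)).

Lemma anchorP n : convcomb X d (alpha n) o (T (x n)) (anchor n).
Proof. apply convcomb_ptP. pose proof (Ha n). lra. Qed.

Lemma T_iterate_dist_q n : d (T (x n)) q <= d (x n) q.
Proof.
  unfold q. rewrite <- curve_limit_fixed at 1.
  apply nonexp_dist; [apply iterate_mem | apply curve_limit_mem].
Qed.

Let bq := d q o + d q p0 + Bx.

Lemma iterate_dist_q n : d (x n) q <= d q p0 + Bx.
Proof.
  pose proof (dist_triangle (x n) p0 q). pose proof (iterate_bounded n).
  rewrite (dist_sym p0 q) in *. lra.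
Qed.

Lemma anchor_dist_q n : d (anchor n) q <= bq.
Proof.
  pose proof (Ha n). rewrite dist_sym.
  eapply Rle_trans; [apply (convcomb_dist_le (alpha n) _ _ _ q ltac:(lra) (anchorP n))|].
  pose proof (T_iterate_dist_q n). pose proof (iterate_dist_q n). rewrite (dist_sym q (T (x n))).
  pose proof (dist_ge0 q o). pose proof (dist_ge0 (T (x n)) q). unfold bq. nra.
Qed.

Lemma anchor_dist_sqr n : (1 - alpha n) * d (anchor n) q ^ 2
  <= (1 - alpha n) * d (x n) q ^ 2 + alpha n * (d o q ^ 2 - d (anchor n) o ^ 2).
Proof.
  pose proof (Ha n) as Han.
  pose proof (convcomb_dist_sqr _ _ _ _ q (anchorP n)) as Hcn.
  rewrite (dist_sym q (anchor n)), (dist_sym q o), (dist_sym q (T (x n))) in Hcn.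
  rewrite (convcomb_dist_left _ _ _ _ (anchorP n)).
  assert (HTq : d (T (x n)) q ^ 2 <= d (x n) q ^ 2)
    by (apply pow_incr; split; [apply dist_ge0 | apply T_iterate_dist_q]).
  pose proof (pow2_ge_0 (d o q)). pose proof (pow2_ge_0 (d (x n) q)).
  pose proof (pow2_ge_0 (d o (T (x n)))).
  assert ((1 - alpha n) * d (anchor n) q ^ 2 <= (1 - alpha n) * (alpha n * d o q ^ 2
    + (1 - alpha n) * d (T (x n)) q ^ 2 - alpha n * (1 - alpha n) * d o (T (x n)) ^ 2))
    by (apply Rmult_le_compat_l; lra).
  assert ((1 - alpha n) * (1 - alpha n) * d (T (x n)) q ^ 2
          <= (1 - alpha n) * (1 - alpha n) * d (x n) q ^ 2)
    by (apply Rmult_le_compat_l; nra).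
  assert ((1 - alpha n) * (1 - alpha n) * d (x n) q ^ 2 <= (1 - alpha n) * 1 * d (x n) q ^ 2)
    by (apply Rmult_le_compat_r; [lra | apply Rmult_le_compat_l; lra]).
  assert (0 <= alpha n * alpha n * d o q ^ 2) by (apply Rmult_le_pos; nra).
  nra.
Qed.

Lemma y_dist_q_sqr n : d (y n) q ^ 2 <= d (anchor n) q ^ 2 + 3 * (bq + Lp) * pert n.
Proof.
  pose proof (Ha n). pose proof (pert_ge0 n). pose proof (pert_le n).
  pose proof (anchor_dist_q n). pose proof (pert_partial_le 0).
  pose proof (dist_ge0 (anchor n) q).
  apply sqr_le_add with (pert n); try split; try apply dist_ge0; try lra.
  pose proof (dist_triangle (y n) (anchor n) q).
  pose proof (convcomb_dist_common_right (alpha n) (u n) o (T (x n)) (y n) (anchor n)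
                ltac:(lra) (Hy n) (anchorP n)).
  unfold pert. lra.
Qed.

Definition gap n :=
  beta n * (1 - beta n) * d (x n) (P (y n)) ^ 2 + beta n * d (y n) (P (y n)) ^ 2.

Definition var_term n := d (anchor n) q ^ 2 + d o q ^ 2 - d (anchor n) o ^ 2.

Lemma iterate_recursion n : d (x (S n)) q ^ 2 <= (1 - alpha n * beta n) * d (x n) q ^ 2
  + alpha n * beta n * var_term n + 3 * (bq + Lp) * pert n - gap n.
Proof.
  pose proof (Ha n). pose proof (Hb n). unfold var_term, gap.
  pose proof (convcomb_dist_sqr _ _ _ _ q (Hx n)) as Hcn.
  replace (1 - (1 - beta n)) with (beta n) in Hcn by ring.
  rewrite (dist_sym q (x (S n))), (dist_sym q (x n)), (dist_sym q (P (y n))) in Hcn.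
  pose proof (proj_dist_sqr (y n) q curve_limit_mem) as Hproj. fold q in Hproj.
  pose proof (y_dist_q_sqr n). pose proof (anchor_dist_sqr n).
  assert (0 <= 3 * (bq + Lp) * pert n).
  { pose proof (pert_ge0 n). pose proof (pert_partial_le 0). pose proof (dist_ge0 (anchor n) q).
    pose proof (anchor_dist_q n). apply Rmult_le_pos; lra. }
  set (A := d (anchor n) q ^ 2) in *. set (s := d (x n) q ^ 2) in *.
  assert (HA : A <= (1 - alpha n) * s + alpha n * (A + d o q ^ 2 - d (anchor n) o ^ 2)) by nra.
  assert (beta n * d (P (y n)) q ^ 2 <= beta n * (A + 3 * (bq + Lp) * pert n - d (y n) (P (y n)) ^ 2))
    by (apply Rmult_le_compat_l; lra).
  assert (beta n * A <= beta n * ((1 - alpha n) * s + alpha n * (A + d o q ^ 2 - d (anchor n) o ^ 2)))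
    by (apply Rmult_le_compat_l; lra).
  assert (beta n * (3 * (bq + Lp) * pert n) <= 3 * (bq + Lp) * pert n) by nra.
  nra.
Qed.

Lemma o_dist_T_iterate n : d o (T (x n)) <= K + Bx.
Proof.
  pose proof (dist_triangle o p0 (T (x n))). pose proof (iterate_bounded n).
  assert (d p0 (T (x n)) <= d p0 (x n)).
  { rewrite <- Hp0T at 1. apply nonexp_dist; [exact Hp0C | apply iterate_mem]. }
  rewrite (dist_sym p0 (x n)) in *. unfold K. lra.
Qed.

Lemma iterate_dist_T n : d (x n) (T (x n))
  <= d (x n) (P (y n)) + d (y n) (P (y n)) + pert n + alpha n * (K + Bx).
Proof.
  pose proof (Ha n). pose proof (o_dist_T_iterate n).
  pose proof (dist_triangle (x n) (P (y n)) (T (x n))).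
  pose proof (dist_triangle (P (y n)) (y n) (T (x n))).
  pose proof (dist_triangle (u n) o (T (x n))).
  rewrite (dist_sym (P (y n)) (y n)), (convcomb_dist_right _ _ _ _ (Hy n)) in *.
  unfold pert. nra.
Qed.

Lemma anchor_dist_iterate n : d (anchor n) (x n) <= alpha n * (K + Bx) + d (x n) (T (x n)).
Proof.
  pose proof (Ha n). pose proof (o_dist_T_iterate n).
  pose proof (dist_triangle (anchor n) (T (x n)) (x n)).
  rewrite (convcomb_dist_right _ _ _ _ (anchorP n)), (dist_sym (T (x n)) (x n)) in *. nra.
Qed.

Let W := 2 * bq + Bx + K.

Lemma var_term_le n : var_term n
  <= d (x n) q ^ 2 - d (x n) o ^ 2 + d o q ^ 2 + 2 * W * d (anchor n) (x n).
Proof.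
  unfold var_term.
  pose proof (anchor_dist_q n). pose proof (iterate_dist_q n). pose proof (iterate_bounded n).
  pose proof (dist_ge0 q o). pose proof (dist_ge0 q p0).
  pose proof (dist_ge0 (x n) p0). pose proof (dist_ge0 o p0).
  pose proof (dist_triangle (anchor n) (x n) q). pose proof (dist_triangle (x n) (anchor n) q).
  pose proof (dist_triangle (x n) (anchor n) o). pose proof (dist_triangle (anchor n) (x n) o).
  pose proof (dist_triangle (anchor n) q o). pose proof (dist_triangle (x n) p0 o).
  rewrite (dist_sym (x n) (anchor n)), (dist_sym p0 o) in *.
  set (D := d (anchor n) (x n)) in *. assert (0 <= D) by apply dist_ge0.
  pose proof (sqr_sub_le (d (anchor n) q) (d (x n) q) D
                (dist_ge0 _ _) (dist_ge0 _ _) ltac:(lra) ltac:(lra)).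
  pose proof (sqr_sub_le (d (x n) o) (d (anchor n) o) D
                (dist_ge0 _ _) (dist_ge0 _ _) ltac:(lra) ltac:(lra)).
  assert (D * (d (anchor n) q + d (x n) q) <= D * W)
    by (apply Rmult_le_compat_l; unfold W, bq, K in *; lra).
  assert (D * (d (x n) o + d (anchor n) o) <= D * W)
    by (apply Rmult_le_compat_l; unfold W, bq, K in *; lra).
  lra.
Qed.

Lemma Bx_ge0 : 0 <= Bx.
Proof. pose proof (iterate_bounded 0). pose proof (dist_ge0 (x 0%nat) p0). lra. Qed.

Lemma W_ge0 : 0 <= W.
Proof.
  pose proof Bx_ge0. pose proof (dist_ge0 o p0). pose proof (dist_ge0 (anchor 0) q).
  pose proof (anchor_dist_q 0). unfold W, K. lra.
Qed.

(* A small [gap n] makes [x n] nearly fixed by [T], and the variational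
   inequality of [curve_limit] then bounds [var_term n]. *)
Lemma var_term_small b0 b1 N0 : 0 < b0 -> 0 < b1 ->
  (forall n, (N0 <= n)%nat -> b0 <= beta n <= 1 - b1) ->
  forall delta, 0 < delta -> exists theta, 0 < theta /\
    exists N, forall n, (N <= n)%nat -> gap n < theta -> var_term n <= delta.
Proof.
  intros Hb0 Hb1 HbN delta Hdelta.
  destruct (curve_limit_variational (delta / 2) Bx ltac:(lra) Bx_ge0) as [theta0 [Hth0 Hvar]].
  pose proof W_ge0. pose proof Bx_ge0. pose proof (dist_ge0 o p0) as HK. fold K in HK.
  set (r := Rmin theta0 (delta / (4 * W + 1))).
  assert (Hr : 0 < r) by (apply Rmin_pos; [lra | apply Rdiv_lt_0_compat; lra]).
  assert (Hr0 : r <= theta0) by apply Rmin_l.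
  assert (HWr : 2 * W * r <= delta / 2).
  { apply Rle_trans with (2 * W * (delta / (4 * W + 1))).
    - apply Rmult_le_compat_l; [lra | apply Rmin_r].
    - apply Rmult_le_reg_r with (4 * W + 1); [lra|].
      replace (2 * W * (delta / (4 * W + 1)) * (4 * W + 1)) with (2 * W * delta) by (field; lra).
      nra. }
  assert (Hlim : is_lim_seq (fun n => pert n + alpha n * (K + Bx)) 0).
  { replace (Finite 0) with (Finite (0 + 0 * (K + Bx))) by (f_equal; ring).
    apply is_lim_seq_plus'; [apply ex_series_lim_0, Hu | apply (is_lim_seq_scal_r alpha (K + Bx) 0), Ha0]. }
  apply is_lim_seq_spec in Hlim. destruct (Hlim (mkposreal (r / 4) ltac:(lra))) as [N HN].
  exists (b0 * b1 * (r / 4) ^ 2). split; [apply Rmult_lt_0_compat; [nra | apply pow_lt; lra]|].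
  exists (N0 + N)%nat. intros n Hn Hgap.
  specialize (HN n ltac:(lia)). simpl in HN. rewrite Rminus_0_r in HN. apply Rabs_def2 in HN.
  pose proof (Ha n). pose proof (pert_ge0 n).
  destruct (small_of_weighted_sqr (beta n) (d (x n) (P (y n))) (d (y n) (P (y n))) b0 b1 (r / 4)
              Hb0 Hb1 (HbN n ltac:(lia)) (dist_ge0 _ _) (dist_ge0 _ _) ltac:(lra) Hgap)
    as [Hxz Hyz].
  pose proof (iterate_dist_T n). pose proof (anchor_dist_iterate n).
  assert (0 <= alpha n * (K + Bx)) by (apply Rmult_le_pos; lra).
  pose proof (Hvar (x n) (iterate_mem n) (iterate_bounded n) ltac:(lra)) as Hxq. fold q in Hxq.
  pose proof (var_term_le n).
  assert (2 * W * d (anchor n) (x n) <= 2 * W * r) by (apply Rmult_le_compat_l; lra).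
  lra.
Qed.

Lemma iterate_converges b0 b1 N0 : 0 < b0 -> 0 < b1 ->
  (forall n, (N0 <= n)%nat -> b0 <= beta n <= 1 - b1) -> d_converges_to X d x q.
Proof.
  intros Hb0 Hb1 HbN. apply d_converges_of_sqr_lim.
  pose proof Bx_ge0. pose proof (dist_ge0 q o). pose proof (dist_ge0 q p0).
  apply (perturbed_recursion_lim _ alpha beta var_term (fun n => 3 * (bq + Lp) * pert n) gap
           b0 ((d q p0 + Bx) ^ 2) (bq ^ 2 + d o q ^ 2) N0).
  - intro n. split; [apply pow2_ge_0 | apply pow_incr; split; [apply dist_ge0 | apply iterate_dist_q]].
  - intro n. pose proof (Ha n). lra.
  - exact Ha0.
  - exact Ha_sum.
  - intro n. pose proof (Hb n). lra.
  - exact Hb0.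
  - intros n Hn. apply HbN, Hn.
  - pose proof (pow2_ge_0 bq). pose proof (pow2_ge_0 (d o q)). lra.
  - intro n. unfold var_term. pose proof (pow2_ge_0 (d (anchor n) o)).
    assert (d (anchor n) q ^ 2 <= bq ^ 2)
      by (apply pow_incr; split; [apply dist_ge0 | apply anchor_dist_q]).
    lra.
  - intro n. pose proof (pert_ge0 n). pose proof (pert_partial_le 0).
    pose proof (anchor_dist_q n). pose proof (dist_ge0 (anchor n) q). apply Rmult_le_pos; lra.
  - apply (ex_series_scal_l (3 * (bq + Lp)) pert), Hu.
  - intro n. unfold gap. pose proof (Hb n).
    assert (0 <= beta n * (1 - beta n)) by nra.
    pose proof (pow2_ge_0 (d (x n) (P (y n)))). pose proof (pow2_ge_0 (d (y n) (P (y n)))). nra.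
  - exact iterate_recursion.
  - exact (var_term_small b0 b1 N0 Hb0 Hb1 HbN).
Qed.

End Iteration.

End Approximating_curve.
End Projection.
End Hadamard_space.

Theorem theorem4p2 (X : Type) (d : X -> X -> R) (HX : hadamard X d) (o : X)
  (C : X -> Prop) (HCne : exists c, C c) (HCcl : h_closed_set X d C)
  (HCcv : h_convex_set X d C)
  (P : X -> X) (HP : is_metric_projection X d C P)
  (T : X -> X) (HT : nonexpansive_on X d C T)
  (HF : exists p, C p /\ T p = p)
  (alpha beta : nat -> R)
  (Ha : forall n, 0 < alpha n < 1) (Hb : forall n, 0 < beta n < 1)
  (u : nat -> X) (x y : nat -> X)
  (Hx0 : C (x 0%nat))
  (Hy : forall n, convcomb X d (alpha n) (u n) (T (x n)) (y n))
  (Hx : forall n, convcomb X d (1 - beta n) (x n) (P (y n)) (x (S n)))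
  (Hi1 : is_lim_seq alpha 0)
  (Hi2 : is_lim_seq (sum_n alpha) p_infty)
  (Hii : Rbar_lt (Finite 0) (LimInf_seq beta) /\
         Rbar_le (LimInf_seq beta) (LimSup_seq beta) /\
         Rbar_lt (LimSup_seq beta) (Finite 1))
  (Hiii : ex_series (fun n => alpha n * d (u n) o)) :
  exists q, C q /\ T q = q /\ d_converges_to X d x q.
Proof.
  destruct HX as [HM [Hcomp [HG HCAT]]]. destruct HF as [p0 [Hp0C Hp0T]].
  destruct Hii as [Hinf [_ Hsup]].
  destruct (LimInf_seq_gt_eventually beta 0 Hinf) as [b0 [Hb0 [Na HNa]]].
  destruct (LimSup_seq_lt_eventually beta 1 Hsup) as [b1 [Hb1 [Nb HNb]]].
  exists (curve_limit X d C T o p0). split; [|split].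
  - exact (curve_limit_mem X d HM Hcomp HG HCAT C P HCcv HP HCcl T o p0 HT Hp0C Hp0T).
  - exact (curve_limit_fixed X d HM Hcomp HG HCAT C P HCcv HP HCcl T o p0 HT Hp0C Hp0T).
  - apply (iterate_converges X d HM Hcomp HG HCAT C P HCcv HP HCcl T o p0 HT Hp0C Hp0T
             alpha beta u x y Ha Hb Hx0 Hy Hx Hiii Hi1 Hi2 b0 (1 - b1) (Na + Nb)); try lra.
    intros n Hn. specialize (HNa n ltac:(lia)). specialize (HNb n ltac:(lia)). lra.
Qed.
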